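(* Let $t\in\mathbb{R}\setminus\{0\}$, $\varepsilon\in(0,\frac1e)$ and $R:=\left\lfloor r\!\left(\frac{e|t|}{2},\frac54\varepsilon\right)/2\right\rfloor$. Then $$\sup_{x\in[-1,1]}\left|\cos(tx)-\Big(J_0(t)+2\sum_{k=1}^R(-1)^kJ_{2k}(t)T_{2k}(x)\Big)\right|\le\varepsilon,\qquad \sup_{x\in[-1,1]}\left|\sin(tx)-2\sum_{k=0}^R(-1)^kJ_{2k+1}(t)T_{2k+1}(x)\right|\le\varepsilon.$$
   Context: $J_m$ denotes the Bessel function of the first kind of order $m$; $T_m(x)=\cos(m\arccos x)$ the Chebyshev polynomial of the first kind. For $\tau>0$ and $\eta\in(0,1)$, $r(\tau,\eta)$ denotes the unique solution $r\in(\tau,\infty)$ of $\eta=(\tau/r)^r$. *)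

From Stdlib Require Import Reals Lra Lia ZArith ClassicalEpsilon.
Open Scope R_scope.

Definition bessel_term (m : nat) (t : R) (k : nat) : R :=
  (-1) ^ k / (INR (fact k) * INR (fact (k + m))) * (t / 2) ^ (2 * k + m).

(** Bessel function of the first kind of order m: the sum of its power series
    (which converges for every t, so the chosen limit is the unique one). *)
Definition besselJ (m : nat) (t : R) : R :=
  epsilon (inhabits 0) (fun l => infinite_sum (bessel_term m t) l).

Definition chebT (m : nat) (x : R) : R := cos (INR m * acos x).

Definition r_fun (tau eta : R) : R :=
  epsilon (inhabits 0) (fun r => tau < r /\ eta = Rpower (tau / r) r).

Fixpoint fsum (n : nat) (f : nat -> R) : R :=
  match n with
  | O => 0
  | S n' => fsum n' f + f n'
  end.

Definition Rbound (t eps : R) : nat :=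
  Z.to_nat (Int_part (r_fun (exp 1 * Rabs t / 2) (5 / 4 * eps) / 2)).

From Stdlib Require Import Reals Lra Lia ZArith ClassicalEpsilon.
From Coquelicot Require Import Coquelicot.
Open Scope R_scope.

(* Expanding (2 cos th)^m binomially and pairing the terms j and m - j writes the degree-m term
   of the power series of cos (t cos th) or sin (t cos th) as a combination of the cos (q th) =
   T_q (cos th), weighted by terms of the power series of J_q(t); regrouping this double series by
   q gives the Neumann expansions cos (t x) = J_0(t) + 2 sum (-1)^k J_2k(t) T_2k(x) and
   sin (t x) = 2 sum (-1)^k J_(2k+1)(t) T_(2k+1)(x), the regrouping error after degree N being
   O((t^2/2)^N / N!).

   For the truncation error, |T_q| <= 1 and |J_m(t)| <= |t/2|^m / m!: indeed
   J_m(t) = (t/2)^m / m! * phi(t^2) where phi(0) = 1 and 4 z phi'' + (4m+4) phi' + phi = 0, so that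
   phi^2 + 4 z phi'^2 does not increase on [0, +oo). The tail sum_(m >= 2R+2) |t/2|^m / m! has ratio
   at most e^-2 past m > r > e|t|/2, and m! >= (m/e)^m e^2 / 2 bounds its first term by
   2/e^2 (e|t| / 2r)^r = 2/e^2 * 5/4 eps; since e^2 >= 6 the tail, doubled, is at most eps. *)

Lemma fsum_S n f : fsum (S n) f = fsum n f + f n.
Proof. reflexivity. Qed.

Lemma fsum_ext n f g : (forall i, (i < n)%nat -> f i = g i) -> fsum n f = fsum n g.
Proof.
  induction n as [|n IH]; intros H; simpl; [reflexivity|].
  rewrite IH, H; auto with arith.
Qed.

Lemma fsum_plus n f g : fsum n (fun i => f i + g i) = fsum n f + fsum n g.
Proof. induction n as [|n IH]; simpl; [lra|rewrite IH; lra]. Qed.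

Lemma fsum_scal n c f : fsum n (fun i => c * f i) = c * fsum n f.
Proof. induction n as [|n IH]; simpl; [lra|rewrite IH; lra]. Qed.

Lemma fsum_opp n f : fsum n (fun i => - f i) = - fsum n f.
Proof. induction n as [|n IH]; simpl; [lra|rewrite IH; lra]. Qed.

Lemma fsum_shift n f : fsum (S n) f = f 0%nat + fsum n (fun i => f (S i)).
Proof. induction n as [|n IH]; simpl in *; [lra|rewrite IH; lra]. Qed.

Lemma fsum_add n m f : fsum (n + m) f = fsum n f + fsum m (fun i => f (n + i)%nat).
Proof.
  induction m as [|m IH]; simpl; [rewrite Nat.add_0_r; lra|].
  rewrite Nat.add_succ_r; simpl; rewrite IH; lra.
Qed.

Lemma fsum_le n f g : (forall i, (i < n)%nat -> f i <= g i) -> fsum n f <= fsum n g.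
Proof.
  induction n as [|n IH]; intros H; simpl; [lra|].
  apply Rplus_le_compat; auto with arith.
Qed.

Lemma Rabs_fsum_le n f : Rabs (fsum n f) <= fsum n (fun i => Rabs (f i)).
Proof.
  induction n as [|n IH]; simpl; [rewrite Rabs_R0; lra|].
  eapply Rle_trans; [apply Rabs_triang|lra].
Qed.

Lemma fsum_sum_f_R0 n f : fsum (S n) f = sum_f_R0 f n.
Proof. induction n as [|n IH]; simpl in *; [lra|rewrite <- IH; lra]. Qed.

Lemma is_lim_seq_fsum a l : infinite_sum a l -> is_lim_seq (fun N => fsum N a) l.
Proof.
  intros H. apply is_lim_seq_incr_1, (is_lim_seq_ext (sum_f_R0 a)).
  - intros n; symmetry; apply fsum_sum_f_R0.
  - now apply is_lim_seq_Reals.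
Qed.

(* Regrouping a triangular double sum: by antidiagonals [n = k + a] or by rows [k]. *)
Lemma fsum_antidiagonal N (F : nat -> nat -> R) :
  fsum N (fun n => fsum (S n) (fun k => F k (n - k)%nat)) =
  fsum N (fun k => fsum (N - k) (F k)).
Proof.
  induction N as [|N IH]; [reflexivity|].
  rewrite fsum_S, IH, fsum_S, (fsum_S N (fun k => fsum (S N - k) (F k))), Nat.sub_diag.
  replace (S N - N)%nat with 1%nat by lia.
  rewrite (fsum_ext N (fun k => fsum (S N - k) (F k))
             (fun k => fsum (N - k) (F k) + F k (N - k)%nat)).
  - rewrite fsum_plus; simpl; lra.
  - intros i Hi. replace (S N - i)%nat with (S (N - i)) by lia. reflexivity.
Qed.

Lemma fsum_fold_center n f : fsum (2 * n + 1) f =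
  f n + fsum n (fun k => f (n - S k)%nat + f (n + S k)%nat).
Proof.
  revert f; induction n as [|n IH]; intros f; [simpl; lra|].
  replace (2 * S n + 1)%nat with (S (S (2 * n + 1))) by lia.
  rewrite fsum_S, fsum_shift, IH, fsum_S, Nat.sub_diag.
  replace (S n + S n)%nat with (S (2 * n + 1)) by lia.
  rewrite (fsum_ext n (fun i => f (S (n - S i)) + f (S (n + S i)))
             (fun k => f (S n - S k)%nat + f (S n + S k)%nat)); [lra|].
  intros i Hi. f_equal; f_equal; lia.
Qed.

Lemma fsum_fold_halves n f : fsum (2 * n + 2) f =
  fsum (S n) (fun k => f (n - k)%nat + f (n + 1 + k)%nat).
Proof.
  revert f; induction n as [|n IH]; intros f; [simpl; lra|].
  replace (2 * S n + 2)%nat with (S (S (2 * n + 2))) by lia.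
  rewrite fsum_S, fsum_shift, IH, (fsum_S (S n)), Nat.sub_diag.
  replace (S n + 1 + S n)%nat with (S (2 * n + 2)) by lia.
  rewrite (fsum_ext (S n) (fun i => f (S (n - i)) + f (S (n + 1 + i)))
             (fun k => f (S n - k)%nat + f (S n + 1 + k)%nat)); [lra|].
  intros i Hi. f_equal; f_equal; lia.
Qed.

(** * Expanding the power series of [cos] and [sin] at [t cos th] *)

Notation Cb := Binomial.C.

Lemma fsum_binomial_pascal M f : fsum (S (S M)) (fun j => Cb (S M) j * f j) =
  fsum (S M) (fun j => Cb M j * f j) + fsum (S M) (fun j => Cb M j * f (S j)).
Proof.
  rewrite fsum_shift, fsum_S, (fsum_shift M), (fsum_S M (fun j => Cb M j * f (S j))).
  rewrite !C_n_0, !C_n_n.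
  rewrite (fsum_ext M (fun i => Cb (S M) (S i) * f (S i))
             (fun i => Cb M i * f (S i) + Cb M (S i) * f (S i))).
  - rewrite fsum_plus; lra.
  - intros i Hi. rewrite <- pascal by lia. ring.
Qed.

Lemma pow_2cos_mul_cos M a b :
  (2 * cos b) ^ M * cos a = fsum (S M) (fun j => Cb M j * cos (a + (INR M - 2 * INR j) * b)).
Proof.
  revert a; induction M as [|M IH]; intros a.
  - simpl. rewrite C_n_n. replace (a + (0 - 2 * 0) * b) with a by ring. ring.
  - rewrite fsum_binomial_pascal.
    rewrite (fsum_ext (S M) (fun j => Cb M j * cos (a + (INR (S M) - 2 * INR j) * b))
               (fun j => Cb M j * cos ((a + b) + (INR M - 2 * INR j) * b))).
    2: { intros i _. rewrite S_INR. f_equal; f_equal; ring. }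
    rewrite (fsum_ext (S M) (fun j => Cb M j * cos (a + (INR (S M) - 2 * INR (S j)) * b))
               (fun j => Cb M j * cos ((a - b) + (INR M - 2 * INR j) * b))).
    2: { intros i _. rewrite !S_INR. f_equal; f_equal; ring. }
    rewrite <- !IH, cos_plus, cos_minus. simpl. ring.
Qed.

Lemma pow_2cos M b :
  (2 * cos b) ^ M = fsum (S M) (fun j => Cb M j * cos ((INR M - 2 * INR j) * b)).
Proof.
  rewrite <- (Rmult_1_r (_ ^ M)), <- cos_0, pow_2cos_mul_cos.
  apply fsum_ext; intros; rewrite Rplus_0_l; reflexivity.
Qed.

Lemma binomial_cos_pair q a th :
  Cb (2 * a + q) a * cos ((INR (2 * a + q) - 2 * INR a) * th) +
  Cb (2 * a + q) (a + q) * cos ((INR (2 * a + q) - 2 * INR (a + q)) * th) =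
  2 * Cb (2 * a + q) a * cos (INR q * th).
Proof.
  rewrite (pascal_step1 _ (a + q)) by lia.
  replace (2 * a + q - (a + q))%nat with a by lia.
  replace ((INR (2 * a + q) - 2 * INR (a + q)) * th) with (- (INR q * th))
    by (rewrite !plus_INR, mult_INR; simpl; ring).
  replace ((INR (2 * a + q) - 2 * INR a) * th) with (INR q * th)
    by (rewrite !plus_INR, mult_INR; simpl; ring).
  rewrite cos_neg; ring.
Qed.

Lemma bessel_term_binomial q t a :
  bessel_term q t a = (-1) ^ a * (Cb (2 * a + q) a / INR (fact (2 * a + q))) * (t / 2) ^ (2 * a + q).
Proof.
  unfold bessel_term, Binomial.C.
  replace (2 * a + q - a)%nat with (a + q)%nat by lia.
  field; repeat split; apply INR_fact_neq_0.
Qed.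

Definition neumann_factor (k : nat) : R := match k with O => 1 | S _ => 2 end.

Lemma cos_series_term n t th :
  (-1) ^ n / INR (fact (2 * n)) * ((t * cos th) ^ 2) ^ n =
  fsum (S n) (fun k => neumann_factor k * (-1) ^ k * cos (INR (2 * k) * th)
                       * bessel_term (2 * k) t (n - k)).
Proof.
  replace (((t * cos th) ^ 2) ^ n) with ((t / 2) ^ (2 * n) * (2 * cos th) ^ (2 * n))
    by (rewrite <- pow_mult, <- Rpow_mult_distr; f_equal; field).
  rewrite pow_2cos, <- (Nat.add_1_r (2 * n)), fsum_fold_center, fsum_shift.
  rewrite <- Rmult_assoc, Rmult_plus_distr_l, <- fsum_scal.
  f_equal.
  - rewrite (bessel_term_binomial 0), Nat.sub_0_r, !Nat.add_0_r.
    replace ((INR (2 * n) - 2 * INR n) * th) with 0 by (rewrite mult_INR; simpl; ring).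
    replace (INR (2 * 0) * th) with 0 by (simpl; ring).
    rewrite cos_0. simpl neumann_factor. field. apply INR_fact_neq_0.
  - apply fsum_ext; intros k Hk.
    destruct (Nat.le_exists_sub (S k) n) as [a [-> _]]; [lia|].
    replace (a + S k - S k)%nat with a by lia.
    replace (a + S k + S k)%nat with (a + 2 * S k)%nat by lia.
    replace (2 * (a + S k))%nat with (2 * a + 2 * S k)%nat by lia.
    rewrite binomial_cos_pair, bessel_term_binomial, pow_add.
    simpl neumann_factor. field. apply INR_fact_neq_0.
Qed.

Lemma sin_series_term n t th :
  (-1) ^ n / INR (fact (2 * n + 1)) * ((t * cos th) ^ 2) ^ n * (t * cos th) =
  fsum (S n) (fun k => 2 * (-1) ^ k * cos (INR (2 * k + 1) * th)
                       * bessel_term (2 * k + 1) t (n - k)).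
Proof.
  rewrite Rmult_assoc.
  replace (((t * cos th) ^ 2) ^ n * (t * cos th))
    with ((t / 2) ^ (2 * n + 1) * (2 * cos th) ^ (2 * n + 1))
    by (rewrite <- Rpow_mult_distr, pow_add, pow_mult, pow_1;
        replace (t / 2 * (2 * cos th)) with (t * cos th) by field; reflexivity).
  rewrite pow_2cos, <- Nat.add_succ_r, fsum_fold_halves, <- Rmult_assoc, <- fsum_scal.
  apply fsum_ext; intros k Hk.
  destruct (Nat.le_exists_sub k n) as [a [-> _]]; [lia|].
  replace (a + k - k)%nat with a by lia.
  replace (a + k + 1 + k)%nat with (a + (2 * k + 1))%nat by lia.
  replace (2 * (a + k) + 1)%nat with (2 * a + (2 * k + 1))%nat by lia.
  rewrite binomial_cos_pair, bessel_term_binomial, pow_add.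
  field. apply INR_fact_neq_0.
Qed.

(** * The bound [|J_m(t)| <= |t/2|^m / m!] *)

Lemma inside_infinite_radius (a : nat -> R) z :
  CV_radius a = p_infty -> Rbar_lt (Rabs z) (CV_radius a).
Proof. intros ->; exact I. Qed.

Section BesselBound.

Variable m : nat.

(* [J_m(t) = (t/2)^m / m! * bessel_phi (t^2)], with [bessel_phi] the power series below. *)
Definition bessel_coef (j : nat) : R :=
  (-1) ^ j * INR (fact m) / (4 ^ j * INR (fact j) * INR (fact (j + m))).

Definition bessel_phi (z : R) : R := PSeries bessel_coef z.
Definition bessel_dphi (z : R) : R := PSeries (PS_derive bessel_coef) z.
Definition bessel_d2phi (z : R) : R := PSeries (PS_derive (PS_derive bessel_coef)) z.

Lemma bessel_coef_0 : bessel_coef 0 = 1.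
Proof. unfold bessel_coef; simpl. field. apply INR_fact_neq_0. Qed.

Lemma bessel_coef_S j : bessel_coef (S j) = - bessel_coef j / (4 * INR (S j) * INR (S j + m)).
Proof.
  unfold bessel_coef. replace (S j + m)%nat with (S (j + m)) by lia.
  rewrite !fact_simpl, !mult_INR. simpl pow.
  assert (0 < INR (S j)) by (apply lt_0_INR; lia).
  assert (0 < INR (S (j + m))) by (apply lt_0_INR; lia).
  field; repeat split; try apply INR_fact_neq_0; try lra. apply pow_nonzero; lra.
Qed.

Lemma bessel_coef_neq_0 j : bessel_coef j <> 0.
Proof.
  unfold bessel_coef. assert (4 ^ j <> 0) by (apply pow_nonzero; lra).
  assert (INR (fact j) <> 0) by apply INR_fact_neq_0.
  assert (INR (fact m) <> 0) by apply INR_fact_neq_0.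
  assert (INR (fact (j + m)) <> 0) by apply INR_fact_neq_0.
  assert ((-1) ^ j <> 0) by (apply pow_nonzero; lra).
  unfold Rdiv. repeat apply Rmult_integral_contrapositive_currified; auto.
  apply Rinv_neq_0_compat. repeat apply Rmult_integral_contrapositive_currified; auto.
Qed.

Lemma CV_radius_bessel_coef : CV_radius bessel_coef = p_infty.
Proof.
  apply CV_radius_infinite_DAlembert; [apply bessel_coef_neq_0|].
  apply is_lim_seq_le_le with (u := fun _ => 0) (w := fun n => / INR (S n)).
  - intros n. rewrite bessel_coef_S.
    assert (0 < INR (S n)) by (apply lt_0_INR; lia).
    assert (1 <= INR (S n + m)) by (apply (le_INR 1); lia).
    replace (- bessel_coef n / (4 * INR (S n) * INR (S n + m)) / bessel_coef n)
      with (- / (4 * INR (S n) * INR (S n + m)))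
      by (field; repeat split; try lra; apply bessel_coef_neq_0).
    rewrite Rabs_Ropp, Rabs_right by (left; apply Rinv_0_lt_compat; nra).
    split; [left; apply Rinv_0_lt_compat; nra|]. apply Rinv_le_contravar; nra.
  - apply is_lim_seq_const.
  - apply (is_lim_seq_incr_1 (fun n => / INR n)).
    replace (Finite 0) with (Rbar_inv p_infty) by reflexivity.
    apply is_lim_seq_inv; [apply is_lim_seq_INR|discriminate].
Qed.

Lemma CV_radius_bessel_dcoef : CV_radius (PS_derive bessel_coef) = p_infty.
Proof. rewrite CV_radius_derive; apply CV_radius_bessel_coef. Qed.

Lemma CV_radius_bessel_d2coef : CV_radius (PS_derive (PS_derive bessel_coef)) = p_infty.
Proof. rewrite CV_radius_derive; apply CV_radius_bessel_dcoef. Qed.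

Lemma is_derive_bessel_phi z : is_derive bessel_phi z (bessel_dphi z).
Proof. apply is_derive_PSeries, inside_infinite_radius, CV_radius_bessel_coef. Qed.

Lemma is_derive_bessel_dphi z : is_derive bessel_dphi z (bessel_d2phi z).
Proof. apply is_derive_PSeries, inside_infinite_radius, CV_radius_bessel_dcoef. Qed.

(* The coefficient recursion [bessel_coef_S] is the ODE read off coefficientwise. *)
Lemma bessel_phi_ode z :
  4 * z * bessel_d2phi z + (4 * INR m + 4) * bessel_dphi z + bessel_phi z = 0.
Proof.
  assert (H0 : is_pseries bessel_coef z (bessel_phi z))
    by apply PSeries_correct, CV_radius_inside, inside_infinite_radius, CV_radius_bessel_coef.
  assert (H1 : is_pseries (PS_derive bessel_coef) z (bessel_dphi z))
    by apply PSeries_correct, CV_radius_inside, inside_infinite_radius, CV_radius_bessel_dcoef.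
  assert (H2 : is_pseries (PS_derive (PS_derive bessel_coef)) z (bessel_d2phi z))
    by apply PSeries_correct, CV_radius_inside, inside_infinite_radius, CV_radius_bessel_d2coef.
  apply is_pseries_incr_1, (is_pseries_scal 4) in H2; [|apply Rmult_comm].
  apply (is_pseries_scal (4 * INR m + 4)) in H1; [|apply Rmult_comm].
  pose proof (is_pseries_unique _ _ _ (is_pseries_plus _ _ _ _ _ (is_pseries_plus _ _ _ _ _ H2 H1) H0)) as H.
  rewrite (PSeries_ext _ (fun _ => 0)), PSeries_const_0 in H.
  { unfold plus, scal in H; simpl in H; unfold mult in H; simpl in H. lra. }
  intros n. unfold PS_plus, PS_scal, PS_incr_1, PS_derive, plus, scal; simpl; unfold mult; simpl.
  assert (0 <= INR m) by apply pos_INR.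
  destruct n as [|n].
  - rewrite bessel_coef_S, bessel_coef_0. unfold zero.
    replace (AbelianMonoid.zero _ _) with 0 by reflexivity.
    replace (INR (1 + m)) with (INR m + 1) by (rewrite plus_INR; simpl; ring).
    simpl INR. field. lra.
  - rewrite (bessel_coef_S (S n)).
    replace (INR (S (S n) + m)) with (INR (S n) + 1 + INR m) by (rewrite plus_INR, !S_INR; ring).
    change (match n with 0%nat => 1 | S _ => INR n + 1 end) with (INR (S n)).
    assert (0 < INR (S n)) by (apply lt_0_INR; lia).
    rewrite !S_INR in *. field. lra.
Qed.

(* A Lyapunov function of the ODE: it decreases on [0, +oo) and dominates [bessel_phi ^ 2]. *)
Definition bessel_energy (z : R) : R := bessel_phi z ^ 2 + 4 * z * bessel_dphi z ^ 2.

Lemma is_derive_bessel_energy z :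
  is_derive bessel_energy z (- (8 * INR m + 4) * bessel_dphi z ^ 2).
Proof.
  unfold bessel_energy. auto_derive.
  - repeat split; eexists; [apply is_derive_bessel_phi|apply is_derive_bessel_dphi].
  - replace (Derive (fun x => bessel_phi x) z) with (bessel_dphi z)
      by (symmetry; apply is_derive_unique, is_derive_bessel_phi).
    replace (Derive (fun x => bessel_dphi x) z) with (bessel_d2phi z)
      by (symmetry; apply is_derive_unique, is_derive_bessel_dphi).
    pose proof (bessel_phi_ode z). nra.
Qed.

Lemma Rabs_bessel_phi_le_1 z : 0 <= z -> Rabs (bessel_phi z) <= 1.
Proof.
  intros Hz.
  destruct (MVT_cor4 bessel_energy (fun c => - (8 * INR m + 4) * bessel_dphi c ^ 2) 0 z)
    with (b := z) as [c [Hc _]].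
  - intros c _. apply is_derive_bessel_energy.
  - rewrite Rminus_0_r, Rabs_right; lra.
  - assert (E0 : bessel_energy 0 = 1)
      by (unfold bessel_energy, bessel_phi; rewrite PSeries_0, bessel_coef_0; ring).
    assert (0 <= INR m) by apply pos_INR.
    assert (0 <= (8 * INR m + 4) * bessel_dphi c ^ 2 * z)
      by (apply Rmult_le_pos; [apply Rmult_le_pos; [lra|apply pow2_ge_0]|lra]).
    assert (0 <= 4 * z * bessel_dphi z ^ 2) by (apply Rmult_le_pos; [lra|apply pow2_ge_0]).
    unfold bessel_energy in Hc, E0. apply Rabs_le. nra.
Qed.

End BesselBound.

Lemma is_series_bessel_term_phi m t :
  is_series (bessel_term m t) ((t / 2) ^ m / INR (fact m) * bessel_phi m (t ^ 2)).
Proof.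
  assert (H : is_pseries (bessel_coef m) (t ^ 2) (bessel_phi m (t ^ 2)))
    by apply PSeries_correct, CV_radius_inside, inside_infinite_radius, CV_radius_bessel_coef.
  apply is_pseries_R, (is_series_scal_l ((t / 2) ^ m / INR (fact m))) in H.
  eapply is_series_ext; [|exact H].
  intros n. unfold scal; simpl; unfold mult; simpl. unfold bessel_term, bessel_coef.
  rewrite pow_add, pow_mult.
  replace ((t / 2) ^ 2) with (t * (t * 1) * / 4) by field.
  rewrite (Rpow_mult_distr (t * (t * 1)) (/ 4)), pow_inv, (Nat.add_comm n m).
  field; repeat split; try apply INR_fact_neq_0; apply pow_nonzero; lra.
Qed.

Lemma besselJ_eq m t : besselJ m t = (t / 2) ^ m / INR (fact m) * bessel_phi m (t ^ 2).
Proof.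
  assert (Hs := is_series_bessel_term_phi m t).
  assert (Hex : exists l, infinite_sum (bessel_term m t) l)
    by (eexists; apply is_series_Reals; exact Hs).
  pose proof (epsilon_spec (inhabits 0) _ Hex) as H.
  apply is_series_Reals, is_series_unique in H. apply is_series_unique in Hs.
  unfold besselJ. etransitivity; [symmetry; exact H|exact Hs].
Qed.

Lemma is_lim_seq_fsum_bessel_term m t :
  is_lim_seq (fun L => fsum L (bessel_term m t)) (besselJ m t).
Proof.
  rewrite besselJ_eq. apply is_lim_seq_fsum, is_series_Reals, is_series_bessel_term_phi.
Qed.

Lemma Rabs_besselJ_le m t : Rabs (besselJ m t) <= Rabs (t / 2) ^ m / INR (fact m).
Proof.
  assert (Hf := INR_fact_lt_0 m).
  rewrite besselJ_eq, Rabs_mult, <- (Rmult_1_r (Rabs (t / 2) ^ m / INR (fact m))).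
  replace (Rabs ((t / 2) ^ m / INR (fact m))) with (Rabs (t / 2) ^ m / INR (fact m))
    by (unfold Rdiv; rewrite RPow_abs, Rabs_mult, Rabs_inv, (Rabs_right (INR _)); lra).
  apply Rmult_le_compat_l.
  - apply Rmult_le_pos; [apply pow_le, Rabs_pos|left; apply Rinv_0_lt_compat; lra].
  - apply Rabs_bessel_phi_le_1, pow2_ge_0.
Qed.

(** * Truncating the Neumann series *)

Lemma Rabs_lim_minus_fsum_le (a : nat -> R) (L : R) M B :
  is_lim_seq (fun N => fsum N a) L ->
  (forall n, Rabs (fsum n (fun i => a (M + i)%nat)) <= B) ->
  Rabs (L - fsum M a) <= B.
Proof.
  intros HL HB.
  assert (Hlim : is_lim_seq (fun n => Rabs (fsum (n + M) a - fsum M a)) (Rabs (L - fsum M a))).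
  { apply (is_lim_seq_abs _ (Finite (L - fsum M a))), is_lim_seq_minus'.
    - apply (is_lim_seq_incr_n (fun N => fsum N a)), HL.
    - apply is_lim_seq_const. }
  refine (is_lim_seq_le _ _ _ _ _ Hlim (is_lim_seq_const B)).
  intros n. rewrite Nat.add_comm, fsum_add.
  replace (fsum M a + fsum n (fun i => a (M + i)%nat) - fsum M a)
    with (fsum n (fun i => a (M + i)%nat)) by ring.
  apply HB.
Qed.

Lemma fsum_exp_le x N : 0 <= x -> fsum N (fun j => x ^ j / INR (fact j)) <= exp x.
Proof.
  intros Hx. apply (is_lim_seq_incr_compare (fun N => fsum N (fun j => x ^ j / INR (fact j)))).
  - apply (is_lim_seq_ext (fun N => fsum N (fun i => / INR (fact i) * x ^ i))).
    + intros; apply fsum_ext; intros; unfold Rdiv; ring.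
    + apply is_lim_seq_fsum. unfold exp. destruct (exist_exp x) as [l Hl]. exact Hl.
  - intros n. simpl. assert (0 <= x ^ n / INR (fact n)); [|lra].
    apply Rmult_le_pos; [apply pow_le; auto|left; apply Rinv_0_lt_compat, INR_fact_lt_0].
Qed.

Lemma fact_mul_le a b : (fact a * fact b <= fact (a + b))%nat.
Proof. induction a as [|a IH]; simpl; [lia|]. pose proof (lt_O_fact (a + b)). nia. Qed.

Lemma Rabs_bessel_term m t k :
  Rabs (bessel_term m t k) = Rabs (t / 2) ^ (2 * k + m) / (INR (fact k) * INR (fact (k + m))).
Proof.
  unfold bessel_term. set (u := t / 2). unfold Rdiv.
  rewrite !Rabs_mult, Rabs_inv, <- !RPow_abs, Rabs_m1, pow1.
  rewrite (Rabs_right (INR (fact k) * INR (fact (k + m)))); [ring|].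
  apply Rle_ge, Rmult_le_pos; apply pos_INR.
Qed.

Lemma Rabs_bessel_term_shift_le m t M i :
  Rabs (bessel_term m t (M + i)) <=
  Rabs (t / 2) ^ m / INR (fact m) * (Rabs (t / 2) ^ (2 * M) / INR (fact M))
  * ((Rabs (t / 2) ^ 2) ^ i / INR (fact i)).
Proof.
  rewrite Rabs_bessel_term. set (s := Rabs (t / 2)).
  assert (Hs : 0 <= s) by apply Rabs_pos.
  assert (F1 := le_INR _ _ (fact_mul_le M i)).
  assert (F2 := le_INR _ _ (fact_le m (M + i + m) ltac:(lia))).
  rewrite mult_INR in F1.
  assert (P1 := INR_fact_lt_0 M). assert (P2 := INR_fact_lt_0 i).
  assert (P3 := INR_fact_lt_0 m). assert (P4 := INR_fact_lt_0 (M + i)).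
  replace (s ^ (2 * (M + i) + m)) with (s ^ m * s ^ (2 * M) * (s ^ 2) ^ i)
    by (rewrite <- pow_mult, <- !pow_add; f_equal; lia).
  replace (s ^ m / INR (fact m) * (s ^ (2 * M) / INR (fact M)) * ((s ^ 2) ^ i / INR (fact i)))
    with (s ^ m * s ^ (2 * M) * (s ^ 2) ^ i / (INR (fact M) * INR (fact i) * INR (fact m)))
    by (field; repeat split; lra).
  apply Rmult_le_compat_l.
  - repeat apply Rmult_le_pos; repeat apply pow_le; auto.
  - apply Rinv_le_contravar; [repeat apply Rmult_lt_0_compat; lra|].
    apply Rmult_le_compat; try lra. apply Rmult_le_pos; lra.
Qed.

Lemma Rabs_besselJ_minus_fsum_le m t M :
  Rabs (besselJ m t - fsum M (bessel_term m t)) <=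
  Rabs (t / 2) ^ m / INR (fact m) * (Rabs (t / 2) ^ (2 * M) / INR (fact M)) * exp ((t / 2) ^ 2).
Proof.
  apply Rabs_lim_minus_fsum_le; [apply is_lim_seq_fsum_bessel_term|].
  intros n. eapply Rle_trans; [apply Rabs_fsum_le|].
  eapply Rle_trans; [apply fsum_le; intros i _; apply Rabs_bessel_term_shift_le|].
  rewrite fsum_scal. apply Rmult_le_compat_l.
  - apply Rmult_le_pos; apply Rmult_le_pos; try apply pow_le, Rabs_pos;
      left; apply Rinv_0_lt_compat, INR_fact_lt_0.
  - rewrite pow2_abs. apply fsum_exp_le, pow2_ge_0.
Qed.

Lemma fsum_inv_fact_binomial N :
  fsum (S N) (fun k => / (INR (fact k) * INR (fact (N - k)))) = 2 ^ N / INR (fact N).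
Proof.
  assert (Hf := INR_fact_lt_0 N).
  replace (2 ^ N) with ((1 + 1) ^ N) by (f_equal; ring).
  rewrite binomial, <- fsum_sum_f_R0. unfold Rdiv. rewrite Rmult_comm, <- fsum_scal.
  apply fsum_ext; intros k Hk. unfold Binomial.C. rewrite !pow1.
  field; repeat split; apply INR_fact_neq_0.
Qed.

Lemma pow_div_fact_mul_le s p k N : 0 <= s -> (k <= N)%nat ->
  s ^ (2 * k + p) / INR (fact (2 * k + p)) * (s ^ (2 * (N - k)) / INR (fact (N - k))) <=
  s ^ p * (s ^ 2) ^ N / (INR (fact k) * INR (fact (N - k))).
Proof.
  intros Hs HkN.
  assert (F := le_INR _ _ (fact_le k (2 * k + p) ltac:(lia))).
  assert (P1 := INR_fact_lt_0 k). assert (P2 := INR_fact_lt_0 (N - k)).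
  assert (P3 := INR_fact_lt_0 (2 * k + p)).
  replace (s ^ (2 * k + p) / INR (fact (2 * k + p)) * (s ^ (2 * (N - k)) / INR (fact (N - k))))
    with (s ^ p * (s ^ 2) ^ N / (INR (fact (2 * k + p)) * INR (fact (N - k)))).
  - apply Rmult_le_compat_l; [apply Rmult_le_pos; repeat apply pow_le; auto|].
    apply Rinv_le_contravar; [nra|]. apply Rmult_le_compat_r; lra.
  - rewrite <- pow_mult, <- !pow_add. replace (p + 2 * N)%nat with (2 * k + p + 2 * (N - k))%nat by lia.
    rewrite pow_add. field. split; lra.
Qed.

Section NeumannSeries.

Variables (t : R) (p : nat) (c : nat -> R).
Hypothesis c_bound : forall k, Rabs (c k) <= 2.

Definition neumann_partial (N : nat) : R := fsum N (fun k => c k * besselJ (2 * k + p) t).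

(* The first [N] terms of the power series of [cos (t cos th)] or [sin (t cos th)],
   regrouped by Bessel orders. *)
Definition neumann_regrouped (N : nat) : R :=
  fsum N (fun k => c k * fsum (N - k) (bessel_term (2 * k + p) t)).

Lemma Rabs_neumann_regrouped_minus_partial_le N :
  Rabs (neumann_regrouped N - neumann_partial N) <=
  2 * exp ((t / 2) ^ 2) * Rabs (t / 2) ^ p * (2 * (t / 2) ^ 2) ^ N / INR (fact N).
Proof.
  set (s := Rabs (t / 2)). assert (Hs : 0 <= s) by apply Rabs_pos.
  set (X := exp ((t / 2) ^ 2)). assert (HX : 0 < X) by apply exp_pos.
  unfold neumann_regrouped, neumann_partial, Rminus.
  rewrite <- fsum_opp, <- fsum_plus.
  eapply Rle_trans; [apply Rabs_fsum_le|].
  apply Rle_trans with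
    (fsum N (fun k => 2 * X * (s ^ p * (s ^ 2) ^ N / (INR (fact k) * INR (fact (N - k)))))).
  - apply fsum_le. intros k Hk.
    replace (c k * fsum (N - k) (bessel_term (2 * k + p) t) + - (c k * besselJ (2 * k + p) t))
      with (- c k * (besselJ (2 * k + p) t - fsum (N - k) (bessel_term (2 * k + p) t))) by ring.
    rewrite Rabs_mult, Rabs_Ropp.
    assert (T := Rabs_besselJ_minus_fsum_le (2 * k + p) t (N - k)). fold s X in T.
    assert (W := pow_div_fact_mul_le s p k N Hs ltac:(lia)).
    rewrite Rmult_assoc. apply Rmult_le_compat; try apply Rabs_pos; [apply c_bound|].
    eapply Rle_trans; [exact T|]. rewrite Rmult_comm. apply Rmult_le_compat_l; lra.
  - rewrite fsum_scal. unfold Rdiv at 1. rewrite fsum_scal.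
    assert (Hsum : fsum N (fun k => / (INR (fact k) * INR (fact (N - k)))) <= 2 ^ N / INR (fact N)).
    { rewrite <- fsum_inv_fact_binomial, fsum_S.
      assert (0 < / (INR (fact N) * INR (fact (N - N))))
        by (apply Rinv_0_lt_compat, Rmult_lt_0_compat; apply INR_fact_lt_0).
      lra. }
    assert (0 <= 2 * X * (s ^ p * (s ^ 2) ^ N)) by (repeat apply Rmult_le_pos; try lra; repeat apply pow_le; auto).
    replace (2 * X * s ^ p * (2 * (t / 2) ^ 2) ^ N / INR (fact N))
      with (2 * X * (s ^ p * (s ^ 2) ^ N) * (2 ^ N / INR (fact N)))
      by (unfold s; rewrite pow2_abs, Rpow_mult_distr; unfold Rdiv; ring).
    rewrite <- Rmult_assoc. apply Rmult_le_compat_l; auto.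
Qed.

Lemma is_lim_seq_neumann_partial (L : R) :
  is_lim_seq neumann_regrouped L -> is_lim_seq neumann_partial L.
Proof.
  intros HL.
  set (bound := fun N => 2 * exp ((t / 2) ^ 2) * Rabs (t / 2) ^ p * ((2 * (t / 2) ^ 2) ^ N / INR (fact N))).
  assert (Hbound : is_lim_seq bound 0).
  { replace (Finite 0) with (Rbar_mult (2 * exp ((t / 2) ^ 2) * Rabs (t / 2) ^ p) 0)
      by (simpl; f_equal; ring).
    apply is_lim_seq_scal_l, is_lim_seq_Reals, cv_speed_pow_fact. }
  assert (Hdiff : is_lim_seq (fun N => neumann_regrouped N - neumann_partial N) 0).
  { apply is_lim_seq_le_le with (u := fun N => - bound N) (w := bound).
    - intros N. apply Rabs_le_between.
      eapply Rle_trans; [apply Rabs_neumann_regrouped_minus_partial_le|].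
      unfold bound, Rdiv. right; ring.
    - replace (Finite 0) with (Rbar_opp 0) by (simpl; f_equal; ring).
      exact (proj1 (is_lim_seq_opp bound 0) Hbound).
    - exact Hbound. }
  apply (is_lim_seq_ext (fun N => neumann_regrouped N - (neumann_regrouped N - neumann_partial N))).
  - intros; ring.
  - replace L with (L - 0) by ring. now apply is_lim_seq_minus'.
Qed.

Lemma Rabs_lim_minus_neumann_partial_le (L : R) M B :
  is_lim_seq neumann_partial L ->
  (forall n, 2 * fsum n (fun i => Rabs (t / 2) ^ (2 * (M + i) + p) / INR (fact (2 * (M + i) + p))) <= B) ->
  Rabs (L - neumann_partial M) <= B.
Proof.
  intros HL HB. apply Rabs_lim_minus_fsum_le; [exact HL|].
  intros n. eapply Rle_trans; [apply Rabs_fsum_le|]. eapply Rle_trans; [|apply (HB n)].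
  rewrite <- fsum_scal. apply fsum_le. intros i _. rewrite Rabs_mult.
  apply Rmult_le_compat; try apply Rabs_pos; [apply c_bound|apply Rabs_besselJ_le].
Qed.

End NeumannSeries.

(** * The tail of the exponential series *)

Lemma exp_1_sqr_ge_6 : 6 <= exp 1 ^ 2.
Proof.
  replace (exp 1 ^ 2) with (exp 2) by (simpl; rewrite Rmult_1_r, <- exp_plus; f_equal; ring).
  eapply Rle_trans; [|apply (fsum_exp_le 2 4); lra].
  simpl. lra.
Qed.

Lemma pow_exp x n : exp x ^ n = exp (INR n * x).
Proof.
  induction n as [|n IH]; [simpl; rewrite Rmult_0_l, exp_0; reflexivity|].
  rewrite <- tech_pow_Rmult, IH, <- exp_plus, S_INR. f_equal; ring.
Qed.

Lemma pow_succ_le_exp_1 m : (1 <= m)%nat -> INR (S m) ^ m <= exp 1 * INR m ^ m.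
Proof.
  intros Hm. assert (Hp : 0 < INR m) by (apply lt_0_INR; lia).
  replace (INR (S m)) with (INR m * (1 + / INR m)) by (rewrite S_INR; field; lra).
  rewrite Rpow_mult_distr, (Rmult_comm (exp 1)).
  apply Rmult_le_compat_l; [apply pow_le; lra|].
  apply Rle_trans with (exp (/ INR m) ^ m).
  - apply pow_incr. split; [assert (0 < / INR m) by (apply Rinv_0_lt_compat; lra); lra|].
    apply exp_ineq1_le.
  - rewrite pow_exp. right. f_equal. field. lra.
Qed.

Lemma fact_lower_bound m : (2 <= m)%nat -> INR m ^ m * exp 1 ^ 2 <= 2 * exp 1 ^ m * INR (fact m).
Proof.
  intros Hm. induction Hm as [|m Hm IH]; [simpl; lra|].
  assert (Hs := pow_succ_le_exp_1 m ltac:(lia)).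
  assert (He := exp_pos 1). assert (0 <= INR (S m)) by apply pos_INR.
  assert (0 <= exp 1 ^ 2) by apply pow2_ge_0.
  rewrite fact_simpl, mult_INR, <- (tech_pow_Rmult (INR (S m))), <- (tech_pow_Rmult (exp 1) m).
  apply Rle_trans with (INR (S m) * exp 1 * (INR m ^ m * exp 1 ^ 2)).
  - replace (INR (S m) * exp 1 * (INR m ^ m * exp 1 ^ 2))
      with (INR (S m) * (exp 1 * INR m ^ m) * exp 1 ^ 2) by ring.
    apply Rmult_le_compat_r; [lra|]. apply Rmult_le_compat_l; lra.
  - replace (2 * (exp 1 * exp 1 ^ m) * (INR (S m) * INR (fact m)))
      with (INR (S m) * exp 1 * (2 * exp 1 ^ m * INR (fact m))) by ring.
    apply Rmult_le_compat_l; [apply Rmult_le_pos|]; lra.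
Qed.

Lemma Rpower_div_self_le tau r M : 0 < tau -> tau < r -> r <= M ->
  Rpower (tau / M) M <= Rpower (tau / r) r.
Proof.
  intros H1 H2 H3. unfold Rpower.
  assert (K : M * ln (tau / M) <= r * ln (tau / r)).
  { unfold Rdiv. rewrite !ln_mult, !ln_Rinv by (try apply Rinv_0_lt_compat; lra).
    assert (ln tau < ln r) by (apply ln_increasing; lra).
    assert (ln r <= ln M) by (destruct (Req_dec r M) as [->|]; [lra|left; apply ln_increasing; lra]).
    nra. }
  destruct K as [K|K]; [left; apply exp_increasing, K|right; rewrite K; reflexivity].
Qed.

Lemma fsum_geometric_le (u : nat -> R) q n :
  0 <= q < 1 -> (forall i, 0 <= u i) -> (forall i, u (S i) <= q * u i) ->
  fsum n u <= u 0%nat / (1 - q).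
Proof.
  intros Hq Hu Hstep.
  assert (Hgeo : forall i, u i <= u 0%nat * q ^ i).
  { induction i as [|i IH]; [simpl; lra|].
    eapply Rle_trans; [apply Hstep|]. simpl.
    replace (u 0%nat * (q * q ^ i)) with (q * (u 0%nat * q ^ i)) by ring.
    apply Rmult_le_compat_l; lra. }
  assert (Hgeom : fsum n (pow q) * (1 - q) = 1 - q ^ n).
  { induction n as [|n IH]; simpl; [ring|]. rewrite Rmult_plus_distr_r, IH. ring. }
  apply Rle_trans with (fsum n (fun i => u 0%nat * q ^ i)); [apply fsum_le; auto|].
  rewrite fsum_scal. unfold Rdiv. apply Rmult_le_compat_l; [apply Hu|].
  apply (Rmult_le_reg_r (1 - q)); [lra|].
  rewrite Hgeom, Rinv_l by lra. assert (0 <= q ^ n) by (apply pow_le; lra). lra.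
Qed.

Lemma pow_div_fact_SS_le a s m : 0 < a -> 0 <= s -> a * s <= INR m ->
  s ^ S (S m) / INR (fact (S (S m))) <= / a ^ 2 * (s ^ m / INR (fact m)).
Proof.
  intros Ha Hs Hm. assert (P := INR_fact_lt_0 m).
  rewrite !fact_simpl, !mult_INR, <- (tech_pow_Rmult s (S m)), <- (tech_pow_Rmult s m), !S_INR.
  assert (Hsq : (a * s) ^ 2 <= (INR m + 1 + 1) * (INR m + 1)).
  { assert (0 <= a * s) by (apply Rmult_le_pos; lra). simpl. nra. }
  rewrite Rpow_mult_distr in Hsq.
  assert (0 <= s ^ m) by (apply pow_le; lra). assert (0 <= INR m) by apply pos_INR.
  assert (0 < a ^ 2) by (apply pow_lt; lra).
  replace (s * (s * s ^ m) / ((INR m + 1 + 1) * ((INR m + 1) * INR (fact m))))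
    with (s ^ 2 / ((INR m + 1 + 1) * (INR m + 1)) * (s ^ m / INR (fact m))) by (field; lra).
  apply Rmult_le_compat_r; [apply Rmult_le_pos; [lra|left; apply Rinv_0_lt_compat; lra]|].
  apply (Rmult_le_reg_l (a ^ 2 * ((INR m + 1 + 1) * (INR m + 1)))); [nra|].
  replace (a ^ 2 * ((INR m + 1 + 1) * (INR m + 1)) * (s ^ 2 / ((INR m + 1 + 1) * (INR m + 1))))
    with (a ^ 2 * s ^ 2) by (field; lra).
  replace (a ^ 2 * ((INR m + 1 + 1) * (INR m + 1)) * / a ^ 2)
    with ((INR m + 1 + 1) * (INR m + 1)) by (field; lra).
  lra.
Qed.

Lemma pow_div_fact_le_Rpower s m : 0 < s -> (2 <= m)%nat ->
  s ^ m / INR (fact m) <= 2 / exp 1 ^ 2 * Rpower (exp 1 * s / INR m) (INR m).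
Proof.
  intros Hs Hm. set (e := exp 1). assert (He : 0 < e) by apply exp_pos.
  assert (Hm0 : 0 < INR m) by (apply lt_0_INR; lia).
  assert (P := INR_fact_lt_0 m). assert (0 < INR m ^ m) by (apply pow_lt; lra).
  assert (HSt := fact_lower_bound m Hm). fold e in HSt.
  rewrite Rpower_pow by (apply Rdiv_lt_0_compat; [apply Rmult_lt_0_compat|]; lra).
  unfold Rdiv. rewrite !Rpow_mult_distr, pow_inv.
  apply (Rmult_le_reg_r (INR (fact m) * INR m ^ m * e ^ 2)).
  { repeat apply Rmult_lt_0_compat; try lra; apply pow_lt; lra. }
  replace (s ^ m * / INR (fact m) * (INR (fact m) * INR m ^ m * e ^ 2))
    with (s ^ m * (INR m ^ m * e ^ 2)) by (field; lra).
  replace (2 * / e ^ 2 * (e ^ m * s ^ m * / INR m ^ m) * (INR (fact m) * INR m ^ m * e ^ 2))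
    with (s ^ m * (2 * e ^ m * INR (fact m))) by (field; split; lra).
  apply Rmult_le_compat_l; [apply pow_le; lra|exact HSt].
Qed.

Lemma fsum_pow_div_fact_tail_le s r m0 n : 0 < s -> exp 1 * s < r -> r < INR m0 -> (2 <= m0)%nat ->
  2 * fsum n (fun i => s ^ (m0 + 2 * i) / INR (fact (m0 + 2 * i))) <= 4 / 5 * Rpower (exp 1 * s / r) r.
Proof.
  intros Hs Hr Hm Hm2.
  set (e := exp 1) in *. assert (He6 := exp_1_sqr_ge_6). fold e in He6.
  assert (He : 0 < e) by apply exp_pos.
  assert (Hq : 0 <= / e ^ 2 < 1).
  { split; [left; apply Rinv_0_lt_compat; lra|].
    rewrite <- Rinv_1. apply Rinv_lt_contravar; lra. }
  set (u := fun i => s ^ (m0 + 2 * i) / INR (fact (m0 + 2 * i))).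
  assert (Hsum : fsum n u <= u 0%nat / (1 - / e ^ 2)).
  { apply fsum_geometric_le; [exact Hq| |].
    - intros i. unfold u. apply Rmult_le_pos; [apply pow_le; lra|].
      left; apply Rinv_0_lt_compat, INR_fact_lt_0.
    - intros i. unfold u. replace (m0 + 2 * S i)%nat with (S (S (m0 + 2 * i))) by lia.
      apply pow_div_fact_SS_le; [lra|lra|].
      apply Rle_trans with (INR m0); [lra|apply le_INR; lia]. }
  assert (Hu0 : u 0%nat <= 2 / e ^ 2 * Rpower (e * s / r) r).
  { unfold u. rewrite Nat.mul_0_r, Nat.add_0_r.
    eapply Rle_trans; [apply pow_div_fact_le_Rpower; auto|].
    apply Rmult_le_compat_l; [apply Rmult_le_pos; [lra|left; apply Rinv_0_lt_compat, pow_lt; lra]|].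
    apply Rpower_div_self_le; [apply Rmult_lt_0_compat| |]; lra. }
  assert (HP : 0 < Rpower (e * s / r) r) by (unfold Rpower; apply exp_pos).
  replace (u 0%nat / (1 - / e ^ 2)) with (e ^ 2 * u 0%nat / (e ^ 2 - 1)) in Hsum by (field; lra).
  apply Rle_trans with (2 * (e ^ 2 * u 0%nat / (e ^ 2 - 1))); [fold u; lra|].
  apply (Rmult_le_reg_r (e ^ 2 - 1)); [lra|].
  replace (2 * (e ^ 2 * u 0%nat / (e ^ 2 - 1)) * (e ^ 2 - 1)) with (2 * e ^ 2 * u 0%nat) by (field; lra).
  replace (2 / e ^ 2 * Rpower (e * s / r) r) with (2 * Rpower (e * s / r) r / e ^ 2) in Hu0 by (field; lra).
  apply (Rmult_le_compat_l (2 * e ^ 2)) in Hu0; [|lra].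
  replace (2 * e ^ 2 * (2 * Rpower (e * s / r) r / e ^ 2)) with (4 * Rpower (e * s / r) r) in Hu0 by (field; lra).
  nra.
Qed.

Lemma r_fun_exists tau eta : 0 < tau -> 0 < eta < 1 ->
  exists r, tau < r /\ eta = Rpower (tau / r) r.
Proof.
  intros Ht He.
  set (L := - ln eta).
  assert (HL : 0 < L).
  { unfold L. assert (ln eta < ln 1) by (apply ln_increasing; lra). rewrite ln_1 in H. lra. }
  (* Writing [r = tau * exp v], the equation becomes [tau * v * exp v = L]. *)
  set (g := fun v => tau * v * exp v - L).
  assert (Hc : continuity g).
  { unfold g. apply continuity_minus; [|apply continuity_const; intros x y; auto].
    apply continuity_mult; [apply continuity_mult|apply derivable_continuous, derivable_exp].
    - apply continuity_const; intros x y; auto.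
    - apply derivable_continuous, derivable_id. }
  set (y := L / tau + 1).
  assert (Hy : 0 < y) by (unfold y; assert (0 < L / tau) by (apply Rdiv_lt_0_compat; lra); lra).
  assert (Hgy : 0 < g y).
  { unfold g. assert (1 + y <= exp y) by apply exp_ineq1_le.
    assert (tau * y = L + tau) by (unfold y; field; lra).
    assert (tau * y * 1 <= tau * y * exp y) by (apply Rmult_le_compat_l; [apply Rmult_le_pos|]; lra).
    lra. }
  destruct (IVT g 0 y Hc Hy ltac:(unfold g; lra) Hgy) as [z [Hz Hgz]].
  assert (Hz0 : 0 < z) by (destruct (Req_dec z 0) as [->|]; [unfold g in Hgz; lra|lra]).
  exists (tau * exp z). split.
  - assert (1 + z <= exp z) by apply exp_ineq1_le. nra.
  - unfold Rpower, g in *.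
    replace (tau / (tau * exp z)) with (exp (- z))
      by (rewrite exp_Ropp; field; split; [apply Rgt_not_eq, exp_pos|lra]).
    rewrite ln_exp. replace (tau * exp z * - z) with (- L) by nra.
    unfold L. rewrite Ropp_involutive, exp_ln; lra.
Qed.

Lemma r_fun_spec tau eta : 0 < tau -> 0 < eta < 1 ->
  tau < r_fun tau eta /\ eta = Rpower (tau / r_fun tau eta) (r_fun tau eta).
Proof.
  intros Ht He. apply (epsilon_spec (inhabits 0) (fun r => tau < r /\ eta = Rpower (tau / r) r)).
  now apply r_fun_exists.
Qed.

Lemma lt_double_succ_Int_part_half x : 0 < x ->
  x < INR (2 * S (Z.to_nat (Int_part (x / 2)))).
Proof.
  intros Hx. destruct (base_Int_part (x / 2)) as [H1 H2].
  assert (Hnn : (0 <= Int_part (x / 2))%Z).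
  { destruct (Z_lt_le_dec (Int_part (x / 2)) 0) as [Hl|Hl]; auto.
    assert (Hl' : (Int_part (x / 2) <= -1)%Z) by lia.
    apply IZR_le in Hl'. lra. }
  rewrite mult_INR, (S_INR (Z.to_nat _)), (INR_IZR_INZ (Z.to_nat _)), Z2Nat.id by auto.
  simpl. lra.
Qed.

Lemma fsum_tail_Rbound_le t eps p n : t <> 0 -> 0 < eps < 1 / exp 1 -> (p <= 1)%nat ->
  2 * fsum n (fun i => Rabs (t / 2) ^ (2 * (S (Rbound t eps) + i) + p)
                       / INR (fact (2 * (S (Rbound t eps) + i) + p))) <= eps.
Proof.
  intros Ht Heps Hp.
  set (s := Rabs (t / 2)). assert (Hs : 0 < s) by (apply Rabs_pos_lt; lra).
  set (tau := exp 1 * Rabs t / 2).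
  assert (Htau : tau = exp 1 * s)
    by (unfold tau, s, Rdiv; rewrite Rabs_mult, Rabs_inv, (Rabs_right 2) by lra; ring).
  assert (He : 2 < exp 1) by (assert (1 + 1 < exp 1) by (apply exp_ineq1; lra); lra).
  assert (Heta : 0 < 5 / 4 * eps < 1).
  { split; [lra|]. assert (1 / exp 1 < 1 / 2); [|lra].
    apply Rmult_lt_compat_l; [lra|apply Rinv_lt_contravar; lra]. }
  assert (Htau0 : 0 < tau) by (rewrite Htau; apply Rmult_lt_0_compat; [apply exp_pos|lra]).
  destruct (r_fun_spec tau (5 / 4 * eps) Htau0 Heta) as [Hr Hrr].
  set (r := r_fun tau (5 / 4 * eps)) in *.
  assert (Hrb : r < INR (2 * S (Rbound t eps) + p)).
  { eapply Rlt_le_trans; [|apply le_INR, (Nat.le_add_r _ p)].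
    unfold Rbound. fold tau r. apply lt_double_succ_Int_part_half. lra. }
  pose proof (fsum_pow_div_fact_tail_le s r (2 * S (Rbound t eps) + p) n Hs ltac:(lra) Hrb ltac:(lia)) as T.
  rewrite <- Htau, <- Hrr in T.
  rewrite (fsum_ext n _ (fun i => s ^ (2 * S (Rbound t eps) + p + 2 * i)
                                  / INR (fact (2 * S (Rbound t eps) + p + 2 * i)))); [lra|].
  intros i _.
  replace (2 * (S (Rbound t eps) + i) + p)%nat with (2 * S (Rbound t eps) + p + 2 * i)%nat by lia.
  reflexivity.
Qed.

Lemma Rabs_lim_minus_neumann_partial_Rbound t eps p c (L : R) :
  t <> 0 -> 0 < eps < 1 / exp 1 -> (p <= 1)%nat -> (forall k, Rabs (c k) <= 2) ->
  is_lim_seq (neumann_regrouped t p c) L ->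
  Rabs (L - neumann_partial t p c (S (Rbound t eps))) <= eps.
Proof.
  intros Ht Heps Hp Hc HL.
  apply Rabs_lim_minus_neumann_partial_le; auto.
  - now apply is_lim_seq_neumann_partial.
  - intros n. now apply fsum_tail_Rbound_le.
Qed.

(** * The Chebyshev expansions of [cos (t x)] and [sin (t x)] *)

Lemma is_lim_seq_cos_series y :
  is_lim_seq (fun N => fsum N (fun n => (-1) ^ n / INR (fact (2 * n)) * (y ^ 2) ^ n)) (cos y).
Proof.
  unfold cos. destruct (exist_cos (Rsqr y)) as [l Hl].
  apply is_lim_seq_fsum. unfold cos_in, cos_n in Hl. rewrite Rsqr_pow2 in Hl. exact Hl.
Qed.

Lemma is_lim_seq_sin_series y :
  is_lim_seq (fun N => fsum N (fun n => (-1) ^ n / INR (fact (2 * n + 1)) * (y ^ 2) ^ n * y)) (sin y).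
Proof.
  unfold sin. destruct (exist_sin (Rsqr y)) as [l Hl].
  apply is_lim_seq_fsum in Hl. unfold sin_n in Hl. rewrite Rsqr_pow2 in Hl.
  apply (is_lim_seq_scal_r _ y) in Hl. rewrite (Rmult_comm y).
  eapply is_lim_seq_ext; [|exact Hl].
  intros N. cbv beta. rewrite Rmult_comm, <- fsum_scal. apply fsum_ext; intros; ring.
Qed.

Definition cos_coef (th : R) (k : nat) : R := neumann_factor k * (-1) ^ k * cos (INR (2 * k) * th).

Definition sin_coef (th : R) (k : nat) : R := 2 * (-1) ^ k * cos (INR (2 * k + 1) * th).

Lemma Rabs_cos_coef_le th k : Rabs (cos_coef th k) <= 2.
Proof.
  unfold cos_coef. rewrite !Rabs_mult, pow_1_abs, Rmult_1_r.
  assert (Rabs (cos (INR (2 * k) * th)) <= 1) by (apply Rabs_le, COS_bound).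
  assert (0 <= Rabs (neumann_factor k) <= 2) by (destruct k; simpl; rewrite Rabs_right; lra).
  assert (0 <= Rabs (cos (INR (2 * k) * th))) by apply Rabs_pos.
  nra.
Qed.

Lemma Rabs_sin_coef_le th k : Rabs (sin_coef th k) <= 2.
Proof.
  unfold sin_coef. rewrite !Rabs_mult, pow_1_abs, (Rabs_right 2) by lra.
  assert (Rabs (cos (INR (2 * k + 1) * th)) <= 1) by (apply Rabs_le, COS_bound).
  lra.
Qed.

Lemma is_lim_seq_cos_regrouped t th :
  is_lim_seq (neumann_regrouped t 0 (cos_coef th)) (cos (t * cos th)).
Proof.
  eapply is_lim_seq_ext; [|apply is_lim_seq_cos_series]. intros N.
  unfold neumann_regrouped.
  rewrite (fsum_ext N _ (fun n => fsum (S n) (fun k => cos_coef th k * bessel_term (2 * k + 0) t (n - k)))).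
  - rewrite (fsum_antidiagonal N (fun k a => cos_coef th k * bessel_term (2 * k + 0) t a)).
    apply fsum_ext. intros k _. now rewrite fsum_scal.
  - intros n _. rewrite cos_series_term. apply fsum_ext; intros.
    unfold cos_coef. rewrite Nat.add_0_r. ring.
Qed.

Lemma is_lim_seq_sin_regrouped t th :
  is_lim_seq (neumann_regrouped t 1 (sin_coef th)) (sin (t * cos th)).
Proof.
  eapply is_lim_seq_ext; [|apply is_lim_seq_sin_series]. intros N.
  unfold neumann_regrouped.
  rewrite (fsum_ext N _ (fun n => fsum (S n) (fun k => sin_coef th k * bessel_term (2 * k + 1) t (n - k)))).
  - rewrite (fsum_antidiagonal N (fun k a => sin_coef th k * bessel_term (2 * k + 1) t a)).
    apply fsum_ext. intros k _. now rewrite fsum_scal.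
  - intros n _. rewrite sin_series_term. apply fsum_ext; intros.
    unfold sin_coef. ring.
Qed.

Lemma neumann_partial_cos_coef t x R :
  neumann_partial t 0 (cos_coef (acos x)) (S R) =
  besselJ 0 t + 2 * fsum R (fun j => (-1) ^ (j + 1) * besselJ (2 * (j + 1)) t * chebT (2 * (j + 1)) x).
Proof.
  unfold neumann_partial. rewrite fsum_shift, <- fsum_scal.
  f_equal.
  - unfold cos_coef. simpl. rewrite Rmult_0_l, cos_0. ring.
  - apply fsum_ext. intros j _. unfold cos_coef, chebT.
    rewrite Nat.add_0_r, Nat.add_1_r. simpl neumann_factor. ring.
Qed.

Lemma neumann_partial_sin_coef t x R :
  neumann_partial t 1 (sin_coef (acos x)) (S R) =
  2 * fsum (R + 1) (fun k => (-1) ^ k * besselJ (2 * k + 1) t * chebT (2 * k + 1) x).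
Proof.
  unfold neumann_partial. rewrite Nat.add_1_r, <- fsum_scal.
  apply fsum_ext. intros k _. unfold sin_coef, chebT. ring.
Qed.

Theorem mainTheorem16 (t eps : R) (ht : t <> 0)
  (heps0 : 0 < eps) (heps1 : eps < 1 / exp 1) :
  (forall x : R, -1 <= x <= 1 ->
     Rabs (cos (t * x) -
           (besselJ 0 t +
            2 * fsum (Rbound t eps)
                  (fun j => (-1) ^ (j + 1) * besselJ (2 * (j + 1)) t
                            * chebT (2 * (j + 1)) x))) <= eps) /\
  (forall x : R, -1 <= x <= 1 ->
     Rabs (sin (t * x) -
           2 * fsum (Rbound t eps + 1)
                 (fun k => (-1) ^ k * besselJ (2 * k + 1) t
                           * chebT (2 * k + 1) x)) <= eps).
Proof.
  split; intros x Hx; rewrite <- (cos_acos x Hx) at 1.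
  - rewrite <- neumann_partial_cos_coef.
    apply Rabs_lim_minus_neumann_partial_Rbound; auto.
    + apply Rabs_cos_coef_le.
    + apply is_lim_seq_cos_regrouped.
  - rewrite <- neumann_partial_sin_coef.
    apply Rabs_lim_minus_neumann_partial_Rbound; auto.
    + apply Rabs_sin_coef_le.
    + apply is_lim_seq_sin_regrouped.
Qed.
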